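(* Let $n,N\ge 1$, let $J\in\Gamma_0(\mathbb{R}^n)$, and let $H_1,\dots,H_N\in\Gamma_0(\mathbb{R}^n)$ with $\mathrm{dom}\, H_j=\mathbb{R}^n$ for every $j$. Define $S_H:\mathbb{R}^n\times\mathbb{R}^N\to\mathbb{R}\cup\{+\infty\}$ by $$S_H(x,t_1,\dots,t_N)=\sup_{p\in\mathbb{R}^n}\Big(\langle p,x\rangle-J^*(p)-\sum_{j=1}^N t_jH_j(p)\Big)$$ if $t_1,\dots,t_N\ge 0$, and $S_H(x,t_1,\dots,t_N)=+\infty$ otherwise. Then $S_H\in\Gamma_0(\mathbb{R}^{n+N})$ and its Legendre transform is $$S_H^*(p,E_1^-,\dots,E_N^-)=J^*(p)+\sum_{j=1}^N I\{E_j^-+H_j(p)\le 0\}\qquad\text{for all }p\in\mathbb{R}^n,\ (E_1^-,\dots,E_N^-)\in\mathbb{R}^N.$$ Moreover, if in addition hypotheses (H1) and (H2) hold, then $S_H(x,t_1,\dots,t_N)$ is finite for every $x\in\mathbb{R}^n$ and every $t_1,\dots,t_N\ge 0$ that are not all zero.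
   Context: $\Gamma_0(\mathbb{R}^m)$ denotes the set of proper, convex, lower semicontinuous functions $\mathbb{R}^m\to\mathbb{R}\cup\{+\infty\}$. For $f\in\Gamma_0(\mathbb{R}^m)$, $f^*(p)=\sup_x \langle p,x\rangle-f(x)$ is its Legendre transform. $I\{\cdot\}$ denotes the indicator function of the set described by the constraint (value $0$ on the set, $+\infty$ off it). A function $g$ is 1-coercive if $g(x)/\|x\|\to+\infty$ as $\|x\|\to\infty$. Hypothesis (H1): each $H_j:\mathbb{R}^n\to\mathbb{R}$ ($j=1,\dots,N$) is finite-valued, convex and 1-coercive, and at least one $H_j$ is strictly convex. Hypothesis (H2): $J\in\Gamma_0(\mathbb{R}^n)$. *)

From Stdlib Require Import Reals Lra ClassicalEpsilon.
Open Scope R_scope.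

Inductive ereal : Type := EFin (r : R) | EPInf | ENInf.

Definition ele (a b : ereal) : Prop :=
  match a, b with
  | ENInf, _ => True
  | _, EPInf => True
  | EFin x, EFin y => x <= y
  | _, _ => False
  end.

Definition elt (a b : ereal) : Prop := ele a b /\ a <> b.

(* addition with the convention (+∞) + (-∞) = +∞ (never used on such pairs here) *)
Definition eplus (a b : ereal) : ereal :=
  match a, b with
  | EPInf, _ => EPInf
  | _, EPInf => EPInf
  | ENInf, _ => ENInf
  | _, ENInf => ENInf
  | EFin x, EFin y => EFin (x + y)
  end.

Definition eopp (a : ereal) : ereal :=
  match a with EFin x => EFin (- x) | EPInf => ENInf | ENInf => EPInf end.

(* real scalar times extended real, convention 0 * (±∞) = 0 *)
Definition escal (t : R) (a : ereal) : ereal :=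
  match Req_EM_T t 0 with
  | left _ => EFin 0
  | right _ =>
      match a with
      | EFin x => EFin (t * x)
      | EPInf => if Rlt_dec 0 t then EPInf else ENInf
      | ENInf => if Rlt_dec 0 t then ENInf else EPInf
      end
  end.

Definition is_lub_E (P : ereal -> Prop) (s : ereal) : Prop :=
  (forall y, P y -> ele y s) /\ (forall b, (forall y, P y -> ele y b) -> ele s b).

Definition esup (P : ereal -> Prop) : ereal :=
  epsilon (inhabits EPInf) (is_lub_E P).

(** * Vectors of R^n, represented as [nat -> R] vanishing at indices >= n *)
Definition inRn (n : nat) (x : nat -> R) : Prop :=
  forall i, (n <= i)%nat -> x i = 0.

Fixpoint rsum (n : nat) (f : nat -> R) : R :=
  match n with O => 0 | S k => rsum k f + f k end.

Fixpoint esum (n : nat) (f : nat -> ereal) : ereal :=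
  match n with O => EFin 0 | S k => eplus (esum k f) (f k) end.

Definition dot (n : nat) (p x : nat -> R) : R := rsum n (fun i => p i * x i).
Definition norm (n : nat) (x : nat -> R) : R := sqrt (dot n x x).

Definition vadd (x y : nat -> R) : nat -> R := fun i => x i + y i.
Definition vsub (x y : nat -> R) : nat -> R := fun i => x i - y i.
Definition vscal (l : R) (x : nat -> R) : nat -> R := fun i => l * x i.

Definition vcat (n : nat) (x t : nat -> R) : nat -> R :=
  fun i => if Nat.ltb i n then x i else t (i - n)%nat.

Definition vfst (n : nat) (z : nat -> R) : nat -> R :=
  fun i => if Nat.ltb i n then z i else 0.
Definition vsnd (n m : nat) (z : nat -> R) : nat -> R :=
  fun j => if Nat.ltb j m then z (n + j)%nat else 0.

Definition proper (n : nat) (f : (nat -> R) -> ereal) : Prop :=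
  (exists x, inRn n x /\ f x <> EPInf) /\ (forall x, inRn n x -> f x <> ENInf).

Definition convex (n : nat) (f : (nat -> R) -> ereal) : Prop :=
  forall x y l, inRn n x -> inRn n y -> 0 < l < 1 ->
    ele (f (vadd (vscal l x) (vscal (1 - l) y)))
        (eplus (escal l (f x)) (escal (1 - l) (f y))).

Definition strictly_convex (n : nat) (f : (nat -> R) -> ereal) : Prop :=
  forall x y l, inRn n x -> inRn n y -> x <> y -> 0 < l < 1 ->
    elt (f (vadd (vscal l x) (vscal (1 - l) y)))
        (eplus (escal l (f x)) (escal (1 - l) (f y))).

Definition lsc (n : nat) (f : (nat -> R) -> ereal) : Prop :=
  forall x a, inRn n x -> elt (EFin a) (f x) ->
    exists d, 0 < d /\
      forall y, inRn n y -> norm n (vsub y x) < d -> elt (EFin a) (f y).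

Definition Gamma0 (n : nat) (f : (nat -> R) -> ereal) : Prop :=
  proper n f /\ convex n f /\ lsc n f.

Definition full_dom (n : nat) (f : (nat -> R) -> ereal) : Prop :=
  forall x, inRn n x -> f x <> EPInf.

Definition finite_valued (n : nat) (f : (nat -> R) -> ereal) : Prop :=
  forall x, inRn n x -> exists r, f x = EFin r.

Definition coercive1 (n : nat) (f : (nat -> R) -> ereal) : Prop :=
  forall M, exists R0, forall x, inRn n x -> R0 < norm n x ->
    ele (EFin (M * norm n x)) (f x).

Definition conj (n : nat) (f : (nat -> R) -> ereal) : (nat -> R) -> ereal :=
  fun p => esup (fun y => exists x, inRn n x /\
                     y = eplus (EFin (dot n p x)) (eopp (f x))).

Definition indic (P : Prop) : ereal :=
  if excluded_middle_informative P then EFin 0 else EPInf.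

Definition tnonneg (N : nat) (t : nat -> R) : Prop :=
  forall j, (j < N)%nat -> 0 <= t j.

(* S_H(x, t) for x ∈ R^n, t ∈ R^N (H_j indexed by j = 0..N-1) *)
Definition SH_xt (n N : nat) (J : (nat -> R) -> ereal)
  (H : nat -> (nat -> R) -> ereal) (x t : nat -> R) : ereal :=
  if excluded_middle_informative (tnonneg N t) then
    esup (fun y => exists p, inRn n p /\
      y = eplus (EFin (dot n p x))
            (eopp (eplus (conj n J p) (esum N (fun j => escal (t j) (H j p))))))
  else EPInf.

Definition SH (n N : nat) (J : (nat -> R) -> ereal)
  (H : nat -> (nat -> R) -> ereal) (z : nat -> R) : ereal :=
  SH_xt n N J H (vfst n z) (vsnd n N z).

From Stdlib Require Import Reals ClassicalEpsilon.
From Stdlib Require Import Lra Lia Classical FunctionalExtensionality.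
Open Scope R_scope.

(** The one non-elementary ingredient is that a convex lsc function f with no
    value -oo has affine minorants passing above any point strictly below its
    graph.  It is obtained from a strict separation theorem in R^m (a point at
    positive distance from a convex set is separated by the vector joining it
    to the nearest point of the closure, built from a minimizing sequence),
    applied to the epigraph of f in R^(n+1).

    The properties of S_H then follow from its definition as a supremum of
    affine functions of (x, t) over the nonnegative orthant: convexity and
    lower semicontinuity are inherited from the affine pieces; properness uses
    an affine minorant of J (so J* is somewhere finite); for the conjugate,
    t = 0 gives S_H* >= J*, the pieces give S_H* <= J* when E_j + H_j(p) <= 0,
    and moving along a ray x = x0 + s g, t = s e_k (g an affine minorant of H_k)
    gives S_H* = +oo when E_k + H_k(p) > 0; finally coercivity of H_k makes
    t_k H_k(p) dominate the linear growth of <p, x>. *)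

Lemma ele_trans a b c : ele a b -> ele b c -> ele a c.
Proof. destruct a, b, c; simpl; intros; auto; try lra; contradiction. Qed.

Lemma ele_antisym a b : ele a b -> ele b a -> a = b.
Proof. destruct a, b; simpl; intros; try contradiction; auto. f_equal; lra. Qed.

Lemma ele_top a : ele a EPInf.
Proof. destruct a; simpl; auto. Qed.

Lemma ele_bot a : ele ENInf a.
Proof. destruct a; simpl; auto. Qed.

Lemma ele_fin_inv a r : ele a (EFin r) -> a <> ENInf -> exists x, a = EFin x /\ x <= r.
Proof. destruct a; simpl; intros; try contradiction; eauto; congruence. Qed.

Lemma ne_bot_of_ge a r : ele (EFin r) a -> a <> ENInf.
Proof. destruct a; simpl; intros; congruence || contradiction. Qed.

Lemma elt_of_ge a b e : ele (EFin b) e -> a < b -> elt (EFin a) e.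
Proof.
  intros Hb Hab. unfold elt. destruct e; simpl in *; split; auto; try lra; try discriminate.
  intro E; inversion E; lra.
Qed.

Lemma eplus_pinf_r a : eplus a EPInf = EPInf.
Proof. destruct a; reflexivity. Qed.

Lemma escal_fin t x : escal t (EFin x) = EFin (t * x).
Proof. unfold escal. destruct (Req_EM_T t 0); auto. subst. f_equal; ring. Qed.

Lemma escal_pinf t : 0 < t -> escal t EPInf = EPInf.
Proof.
  intro. unfold escal. destruct (Req_EM_T t 0); [lra|].
  destruct (Rlt_dec 0 t); auto; lra.
Qed.

(** Suprema in the extended reals: every predicate has a least upper bound
    (completeness of R), so [esup] is characterised by [is_lub_E]. *)

Lemma lub_E_exists (P : ereal -> Prop) : exists s, is_lub_E P s.
Proof.
  destruct (classic (P EPInf)) as [Hp|Hnp].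
  { exists EPInf. split; [intros; apply ele_top|intros b Hb; apply Hb, Hp]. }
  destruct (classic (exists r, P (EFin r))) as [[r0 Hr0]|Hnf].
  - destruct (classic (exists M, forall r, P (EFin r) -> r <= M)) as [[M HM]|Hnb].
    + destruct (completeness (fun r => P (EFin r))) as [m [Hm1 Hm2]].
      { exists M; intros r Hr; apply HM, Hr. }
      { exists r0; exact Hr0. }
      exists (EFin m). split.
      * intros [r| |] Hy; simpl; auto; apply Hm1, Hy.
      * intros [b| |] Hb; simpl; auto.
        -- apply Hm2. intros r Hr. apply (Hb _ Hr).
        -- exact (Hb _ Hr0).
    + exists EPInf. split; [intros; apply ele_top|].
      intros [b| |] Hb; simpl; auto.
      * apply Hnb; exists b; intros r Hr; apply (Hb _ Hr).
      * exact (Hb _ Hr0).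
  - exists ENInf. split; [|intros; simpl; auto].
    intros [r| |] Hy; simpl; auto. apply Hnf; eauto.
Qed.

Lemma esup_ub P y : P y -> ele y (esup P).
Proof. apply (proj1 (epsilon_spec _ _ (lub_E_exists P))). Qed.

Lemma esup_least P b : (forall y, P y -> ele y b) -> ele (esup P) b.
Proof. apply (proj2 (epsilon_spec _ _ (lub_E_exists P))). Qed.

Lemma esup_inf P : (forall M, exists y, P y /\ ele (EFin M) y) -> esup P = EPInf.
Proof.
  intros HP. destruct (esup P) eqn:E; auto; exfalso.
  - destruct (HP (r + 1)) as [y [Hy Hl]].
    pose proof (ele_trans _ _ _ Hl (esup_ub P y Hy)) as Hc. rewrite E in Hc; simpl in Hc; lra.
  - destruct (HP 0) as [y [Hy Hl]].
    pose proof (ele_trans _ _ _ Hl (esup_ub P y Hy)) as Hc. rewrite E in Hc; exact Hc.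
Qed.

Lemma esum_fin N F h : (forall j, (j < N)%nat -> F j = EFin (h j)) -> esum N F = EFin (rsum N h).
Proof.
  induction N; intros HF; simpl; auto.
  rewrite IHN by (intros; apply HF; lia). rewrite HF by lia. reflexivity.
Qed.

Lemma esum_indic_all N (P : nat -> Prop) :
  (forall j, (j < N)%nat -> P j) -> esum N (fun j => indic (P j)) = EFin 0.
Proof.
  induction N; intros HP; simpl; auto. rewrite IHN by (intros; apply HP; lia).
  unfold indic. destruct (excluded_middle_informative (P N)) as [_|HN].
  - simpl; f_equal; ring.
  - exfalso; apply HN, HP; lia.
Qed.

Lemma esum_indic_ex N (P : nat -> Prop) :
  (exists j, (j < N)%nat /\ ~ P j) -> esum N (fun j => indic (P j)) = EPInf.
Proof.
  induction N; intros [j [Hj Hn]]; simpl; [lia|].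
  destruct (Nat.eq_dec j N) as [->|Hne].
  - unfold indic at 2. destruct (excluded_middle_informative (P N)); [contradiction|].
    apply eplus_pinf_r.
  - rewrite IHN; [reflexivity|]. exists j; split; auto; lia.
Qed.

Lemma rsum_ext n f g : (forall i, (i < n)%nat -> f i = g i) -> rsum n f = rsum n g.
Proof.
  induction n; simpl; intros Hfg; auto.
  rewrite IHn by (intros; apply Hfg; lia). rewrite Hfg by lia. reflexivity.
Qed.

Lemma rsum_le n f g : (forall i, (i < n)%nat -> f i <= g i) -> rsum n f <= rsum n g.
Proof.
  induction n; simpl; intros Hfg; [lra|].
  assert (f n <= g n) by (apply Hfg; lia).
  assert (rsum n f <= rsum n g) by (apply IHn; intros; apply Hfg; lia). lra.
Qed.

Lemma rsum_plus n f g : rsum n (fun i => f i + g i) = rsum n f + rsum n g.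
Proof. induction n; simpl; [ring|]. rewrite IHn; ring. Qed.

Lemma rsum_scal n a f : rsum n (fun i => a * f i) = a * rsum n f.
Proof. induction n; simpl; [ring|]. rewrite IHn; ring. Qed.

Lemma rsum_opp n f : rsum n (fun i => - f i) = - rsum n f.
Proof. induction n; simpl; [ring|]. rewrite IHn; ring. Qed.

Lemma rsum_zero n f : (forall i, (i < n)%nat -> f i = 0) -> rsum n f = 0.
Proof. induction n; simpl; intros Hf; auto. rewrite IHn by (intros; apply Hf; lia). rewrite Hf by lia. ring. Qed.

Lemma rsum_nonneg n f : (forall i, (i < n)%nat -> 0 <= f i) -> 0 <= rsum n f.
Proof.
  intros Hf. rewrite <- (rsum_zero n (fun _ => 0)) by auto. apply rsum_le; auto.
Qed.

Lemma rsum_abs n f : Rabs (rsum n f) <= rsum n (fun i => Rabs (f i)).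
Proof.
  induction n; simpl; [rewrite Rabs_R0; lra|].
  eapply Rle_trans; [apply Rabs_triang|lra].
Qed.

Lemma rsum_split n m f : rsum (n + m) f = rsum n f + rsum m (fun j => f (n + j)%nat).
Proof.
  induction m; simpl; [rewrite Nat.add_0_r; ring|].
  rewrite Nat.add_succ_r; simpl; rewrite IHm; ring.
Qed.

Definition unitv (k : nat) (s : R) : nat -> R := fun j => if Nat.eqb j k then s else 0.

Lemma rsum_unitv n k s f : (k < n)%nat -> rsum n (fun j => unitv k s j * f j) = s * f k.
Proof.
  intros Hk. induction n; simpl; [lia|].
  unfold unitv at 2. destruct (Nat.eqb_spec n k) as [->|Hne].
  - rewrite rsum_zero; [ring|]. intros i Hi. unfold unitv.
    destruct (Nat.eqb_spec i k); [lia|ring].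
  - rewrite IHn by lia. ring.
Qed.

Lemma dot_sym n a b : dot n a b = dot n b a.
Proof. unfold dot. apply rsum_ext; intros; ring. Qed.

Lemma dot_nonneg n a : 0 <= dot n a a.
Proof. apply rsum_nonneg. intros; nra. Qed.

Lemma dot_vadd_r n a b c : dot n a (vadd b c) = dot n a b + dot n a c.
Proof. unfold dot, vadd. rewrite <- rsum_plus. apply rsum_ext; intros; ring. Qed.

Lemma dot_vscal_r n k a b : dot n a (vscal k b) = k * dot n a b.
Proof. unfold dot, vscal. rewrite <- rsum_scal. apply rsum_ext; intros; ring. Qed.

Lemma dot_vscal_l n k a b : dot n (vscal k a) b = k * dot n a b.
Proof. rewrite dot_sym, dot_vscal_r, dot_sym. reflexivity. Qed.

Lemma dot_vsub_r n a b c : dot n a (vsub b c) = dot n a b - dot n a c.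
Proof.
  unfold dot, vsub. rewrite Rminus_def, <- (Rmult_1_l (rsum n (fun i => a i * c i))).
  rewrite Ropp_mult_distr_l, <- rsum_scal, <- rsum_plus. apply rsum_ext; intros; ring.
Qed.

Lemma dot_vsub_l n a b c : dot n (vsub b c) a = dot n b a - dot n c a.
Proof. rewrite !(dot_sym n _ a). apply dot_vsub_r. Qed.

Lemma coord_sq_le n a i : (i < n)%nat -> a i * a i <= dot n a a.
Proof.
  unfold dot. induction n; intros Hi; simpl; [lia|].
  destruct (Nat.eq_dec i n) as [->|Hne].
  - pose proof (dot_nonneg n a). unfold dot in *. lra.
  - specialize (IHn ltac:(lia)). nra.
Qed.

Lemma norm_nonneg n a : 0 <= norm n a.
Proof. apply sqrt_pos. Qed.

Lemma norm_sq n a : norm n a * norm n a = dot n a a.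
Proof. apply sqrt_sqrt, dot_nonneg. Qed.

Lemma coord_le_norm n a i : (i < n)%nat -> Rabs (a i) <= norm n a.
Proof.
  intro Hi. rewrite <- sqrt_Rsqr_abs. apply sqrt_le_1_alt. apply coord_sq_le; auto.
Qed.

Definition sabs n a := rsum n (fun i => Rabs (a i)).

Lemma sabs_nonneg n a : 0 <= sabs n a.
Proof. apply rsum_nonneg; intros; apply Rabs_pos. Qed.

Lemma dot_bound n a b : Rabs (dot n a b) <= sabs n a * norm n b.
Proof.
  eapply Rle_trans; [apply rsum_abs|]. unfold sabs. rewrite Rmult_comm, <- rsum_scal.
  apply rsum_le. intros i Hi. rewrite Rabs_mult.
  pose proof (coord_le_norm n b i Hi). pose proof (Rabs_pos (a i)). nra.
Qed.

Lemma inRn_vadd n a b : inRn n a -> inRn n b -> inRn n (vadd a b).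
Proof. unfold inRn, vadd; intros Ha Hb i Hi; rewrite Ha, Hb by auto; ring. Qed.

Lemma inRn_vsub n a b : inRn n a -> inRn n b -> inRn n (vsub a b).
Proof. unfold inRn, vsub; intros Ha Hb i Hi; rewrite Ha, Hb by auto; ring. Qed.

Lemma inRn_vscal n k a : inRn n a -> inRn n (vscal k a).
Proof. unfold inRn, vscal; intros Ha i Hi; rewrite Ha by auto; ring. Qed.

Lemma vfst_lt n z i : (i < n)%nat -> vfst n z i = z i.
Proof. intro Hi. unfold vfst. replace (Nat.ltb i n) with true by (symmetry; apply Nat.ltb_lt; lia). auto. Qed.

Lemma vsnd_lt n N z j : (j < N)%nat -> vsnd n N z j = z (n + j)%nat.
Proof. intro Hj. unfold vsnd. replace (Nat.ltb j N) with true by (symmetry; apply Nat.ltb_lt; lia). auto. Qed.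

Lemma inRn_vfst n z : inRn n (vfst n z).
Proof. intros i Hi. unfold vfst. replace (Nat.ltb i n) with false by (symmetry; apply Nat.ltb_ge; lia). auto. Qed.

Lemma vfst_vcat n x t : inRn n x -> vfst n (vcat n x t) = x.
Proof.
  intro Hx. apply functional_extensionality. intro i. unfold vfst, vcat.
  destruct (Nat.ltb_spec i n); auto. symmetry; apply Hx; lia.
Qed.

Lemma vsnd_vcat n N x t : inRn N t -> vsnd n N (vcat n x t) = t.
Proof.
  intro Ht. apply functional_extensionality. intro j. unfold vsnd, vcat.
  destruct (Nat.ltb_spec j N).
  - replace (Nat.ltb (n + j) n) with false by (symmetry; apply Nat.ltb_ge; lia).
    f_equal; lia.
  - symmetry; apply Ht; lia.
Qed.

Lemma inRn_vcat n N x t : inRn n x -> inRn N t -> inRn (n + N) (vcat n x t).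
Proof.
  intros Hx Ht i Hi. unfold vcat.
  replace (Nat.ltb i n) with false by (symmetry; apply Nat.ltb_ge; lia). apply Ht; lia.
Qed.

Lemma vfst_comb n z1 z2 l :
  vfst n (vadd (vscal l z1) (vscal (1 - l) z2)) = vadd (vscal l (vfst n z1)) (vscal (1 - l) (vfst n z2)).
Proof. apply functional_extensionality; intro i. unfold vfst, vadd, vscal. destruct (Nat.ltb i n); ring. Qed.

Lemma vsnd_comb n N z1 z2 l :
  vsnd n N (vadd (vscal l z1) (vscal (1 - l) z2)) = vadd (vscal l (vsnd n N z1)) (vscal (1 - l) (vsnd n N z2)).
Proof. apply functional_extensionality; intro i. unfold vsnd, vadd, vscal. destruct (Nat.ltb i N); ring. Qed.

Lemma dot_vcat n N p E z : dot (n + N) (vcat n p E) z = dot n p (vfst n z) + dot N E (vsnd n N z).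
Proof.
  unfold dot. rewrite rsum_split. f_equal; apply rsum_ext.
  - intros i Hi. rewrite vfst_lt by auto. unfold vcat.
    replace (Nat.ltb i n) with true by (symmetry; apply Nat.ltb_lt; lia). auto.
  - intros j Hj. rewrite vsnd_lt by auto. unfold vcat.
    replace (Nat.ltb (n + j) n) with false by (symmetry; apply Nat.ltb_ge; lia).
    replace (n + j - n)%nat with j by lia. auto.
Qed.

Lemma cv_const c : Un_cv (fun _ : nat => c) c.
Proof.
  intros e He. exists 0%nat. intros. unfold R_dist.
  replace (c - c) with 0 by ring. rewrite Rabs_R0; lra.
Qed.

Lemma cv_le a b la lb : Un_cv a la -> Un_cv b lb -> (forall k, a k <= b k) -> la <= lb.
Proof.
  intros Ha Hb Hab. apply Rnot_lt_le. intro Hlt.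
  destruct (Ha ((la - lb) / 2)) as [N1 H1]; [lra|].
  destruct (Hb ((la - lb) / 2)) as [N2 H2]; [lra|].
  specialize (H1 (N1 + N2)%nat ltac:(lia)). specialize (H2 (N1 + N2)%nat ltac:(lia)).
  specialize (Hab (N1 + N2)%nat). unfold R_dist in *.
  apply Rabs_def2 in H1. apply Rabs_def2 in H2. lra.
Qed.

Definition vcv (m : nat) (w : nat -> nat -> R) (y : nat -> R) : Prop :=
  forall i, (i < m)%nat -> Un_cv (fun k => w k i) (y i).

Lemma vcv_const m y : vcv m (fun _ => y) y.
Proof. intros i _. apply cv_const. Qed.

Lemma vcv_vsub m a b la lb :
  vcv m a la -> vcv m b lb -> vcv m (fun k => vsub (a k) (b k)) (vsub la lb).
Proof. intros Ha Hb i Hi. apply CV_minus; auto. Qed.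

Lemma cv_dot m a b la lb :
  vcv m a la -> vcv m b lb -> Un_cv (fun k => dot m (a k) (b k)) (dot m la lb).
Proof.
  unfold dot. induction m; intros Ha Hb; simpl; [apply cv_const|].
  apply CV_plus.
  - apply IHm; intros i Hi; [apply Ha|apply Hb]; lia.
  - apply CV_mult; [apply Ha|apply Hb]; lia.
Qed.

Definition ep (k : nat) : R := / (INR k + 1).

Lemma ep_pos k : 0 < ep k.
Proof. unfold ep. apply Rinv_0_lt_compat. pose proof (pos_INR k). lra. Qed.

Lemma ep_le K k : (0 < K)%nat -> (K <= k)%nat -> ep k <= / INR K.
Proof.
  intros HK Hk. apply Rinv_le_contravar; [apply lt_0_INR; auto|].
  apply le_INR in Hk. lra.
Qed.

Lemma ep_cv : Un_cv ep 0.
Proof.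
  intros e He. destruct (archimed_cor1 e He) as [K [HK HK0]]. exists K. intros k Hk.
  unfold R_dist. rewrite Rminus_0_r, Rabs_right by (left; apply ep_pos).
  eapply Rle_lt_trans; [apply ep_le|]; eauto.
Qed.

Lemma ep_cauchy (F : nat -> R) :
  (forall k j, (F k - F j) * (F k - F j) <= 2 * ep k + 2 * ep j) -> Cauchy_crit F.
Proof.
  intros HF e He. destruct (archimed_cor1 (e * e / 4)) as [K [HK HK0]]; [nra|].
  exists K. intros k j Hk Hj. unfold R_dist.
  pose proof (HF k j). pose proof (ep_le K k HK0 Hk). pose proof (ep_le K j HK0 Hj).
  apply Rabs_def1; nra.
Qed.

Lemma vec_complete m (w : nat -> nat -> R) :
  (forall i, (i < m)%nat -> Cauchy_crit (fun k => w k i)) -> exists y, vcv m w y.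
Proof.
  intros Hc. exists (fun i => epsilon (inhabits 0) (Un_cv (fun k => w k i))).
  intros i Hi. apply epsilon_spec. destruct (R_complete _ (Hc i Hi)) as [l Hl]. eauto.
Qed.

Definition sqdist (m : nat) (a b : nat -> R) : R := dot m (vsub a b) (vsub a b).

Lemma sqdist_nonneg m a b : 0 <= sqdist m a b.
Proof. apply dot_nonneg. Qed.

Lemma sqdist_comb m l u w z :
  sqdist m (vadd (vscal l u) (vscal (1 - l) w)) z =
  sqdist m w z + 2 * l * dot m (vsub w z) (vsub u w) + l * l * sqdist m u w.
Proof.
  unfold sqdist, dot. rewrite <- !rsum_scal, <- !rsum_plus.
  apply rsum_ext; intros; unfold vsub, vadd, vscal; ring.
Qed.

Lemma parallelogram m a b z :
  sqdist m a b = 2 * sqdist m a z + 2 * sqdist m b z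
                 - 4 * sqdist m (vadd (vscal (/ 2) a) (vscal (1 - / 2) b)) z.
Proof.
  unfold sqdist, dot. rewrite Rminus_def, Ropp_mult_distr_l, <- !rsum_scal, <- !rsum_plus.
  apply rsum_ext; intros; unfold vsub, vadd, vscal; field.
Qed.

Lemma first_order_nonneg Q C :
  0 <= C -> (forall l, 0 < l < 1 -> - 2 * l * Q - l * l * C <= 0) -> 0 <= Q.
Proof.
  intros HC Hl. apply Rnot_lt_le. intro HQ.
  set (l := Rmin (/ 2) (- Q / (C + 1))).
  assert (Hl0 : 0 < l) by (apply Rmin_glb_lt; [lra|apply Rdiv_lt_0_compat; lra]).
  assert (Hl2 : l <= / 2) by apply Rmin_l.
  assert (Hl3 : l * (C + 1) <= - Q).
  { assert (l <= - Q / (C + 1)) as Hl1 by apply Rmin_r.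
    apply Rmult_le_compat_r with (r := C + 1) in Hl1; [|lra].
    replace (- Q / (C + 1) * (C + 1)) with (- Q) in Hl1 by (field; lra). lra. }
  specialize (Hl l ltac:(lra)). nra.
Qed.

(** Strict separation of a point from a convex set at positive distance:
    if every point of the convex set C is at squared distance >= c0 > 0 from z0,
    then some v <> 0 satisfies |v|^2 <= <v, u - z0> for all u in C
    (v is z0's vector to the nearest point of the closure of C). *)
Section Separation.
Variables (m : nat) (C : (nat -> R) -> Prop) (z0 : nat -> R) (c0 : R).
Hypothesis C_convex :
  forall u w l, C u -> C w -> 0 < l < 1 -> C (vadd (vscal l u) (vscal (1 - l) w)).
Hypothesis C_nonempty : exists u, C u.
Hypothesis c0_pos : 0 < c0.
Hypothesis C_far : forall u, C u -> c0 <= sqdist m u z0.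

Lemma minimizing_sequence : exists D w,
  c0 <= D /\ (forall u, C u -> D <= sqdist m u z0) /\
  (forall k, C (w k) /\ sqdist m (w k) z0 < D + ep k).
Proof.
  destruct C_nonempty as [u0 Hu0].
  destruct (completeness (fun r => exists u, C u /\ r = - sqdist m u z0)) as [s [Hs1 Hs2]].
  { exists 0. intros r [u [_ ->]]. pose proof (sqdist_nonneg m u z0). lra. }
  { eauto. }
  assert (Hnear : forall k, exists u, C u /\ sqdist m u z0 < - s + ep k).
  { intros k. apply NNPP. intro Hno. pose proof (ep_pos k).
    enough (s <= s - ep k) by lra. apply Hs2. intros r [u [Hu ->]].
    assert (~ sqdist m u z0 < - s + ep k) by eauto. lra. }
  exists (- s), (fun k => epsilon (inhabits u0) (fun u => C u /\ sqdist m u z0 < - s + ep k)).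
  split; [|split].
  - enough (s <= - c0) by lra. apply Hs2. intros r [u [Hu ->]]. pose proof (C_far u Hu). lra.
  - intros u Hu. enough (- sqdist m u z0 <= s) by lra. apply Hs1; eauto.
  - intros k. apply epsilon_spec, Hnear.
Qed.

Lemma separation : exists v, 0 < dot m v v /\
  forall u, C u -> dot m v v <= dot m v (vsub u z0).
Proof.
  destruct minimizing_sequence as [D [w [HcD [HD Hw]]]].
  (* the minimizing sequence is Cauchy, by the parallelogram identity *)
  assert (Hpar : forall k j, sqdist m (w k) (w j) <= 2 * ep k + 2 * ep j).
  { intros k j. destruct (Hw k) as [Ck Dk]. destruct (Hw j) as [Cj Dj].
    pose proof (HD _ (C_convex _ _ (/ 2) Ck Cj ltac:(lra))).
    rewrite (parallelogram m (w k) (w j) z0). lra. }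
  destruct (vec_complete m w) as [y Hwy].
  { intros i Hi. apply ep_cauchy. intros k j. eapply Rle_trans; [|apply (Hpar k j)].
    apply (coord_sq_le m (vsub (w k) (w j)) i Hi). }
  assert (HDy : D <= sqdist m y z0).
  { apply (cv_le (fun _ => D) (fun k => sqdist m (w k) z0)); [apply cv_const| |].
    - apply cv_dot; apply vcv_vsub; auto; apply vcv_const.
    - intro k. apply HD, Hw. }
  (* variational inequality characterising the nearest point y *)
  assert (Hvar : forall u, C u -> 0 <= dot m (vsub y z0) (vsub u y)).
  { intros u Hu. apply (first_order_nonneg _ (sqdist m u y)); [apply sqdist_nonneg|].
    intros l Hl. apply (cv_le (fun k => - 2 * l * dot m (vsub (w k) z0) (vsub u (w k))
                                     - l * l * sqdist m u (w k)) ep).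
    - apply CV_minus; apply CV_mult; try apply cv_const;
        apply cv_dot; apply vcv_vsub; auto; apply vcv_const.
    - apply ep_cv.
    - intro k. destruct (Hw k) as [Ck Dk].
      pose proof (HD _ (C_convex _ _ l Hu Ck Hl)) as Hm.
      rewrite sqdist_comb in Hm. lra. }
  exists (vsub y z0). split.
  - fold (sqdist m y z0). lra.
  - intros u Hu. specialize (Hvar u Hu).
    replace (vsub u z0) with (vadd (vsub u y) (vsub y z0))
      by (apply functional_extensionality; intro i; unfold vadd, vsub; ring).
    rewrite dot_vadd_r. lra.
Qed.

End Separation.

Lemma inRn_unitv N k s : (k < N)%nat -> inRn N (unitv k s).
Proof. intros Hk j Hj. unfold unitv. destruct (Nat.eqb_spec j k); [lia|auto]. Qed.

Lemma dot_unitv N k s b : (k < N)%nat -> dot N (unitv k s) b = s * b k.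
Proof. apply rsum_unitv. Qed.

Lemma vsub_vcat n x t y r : vsub (vcat n x t) (vcat n y r) = vcat n (vsub x y) (vsub t r).
Proof. apply functional_extensionality; intro i. unfold vsub, vcat. destruct (Nat.ltb i n); auto. Qed.

Lemma comb_vcat n l x t y r :
  vadd (vscal l (vcat n x t)) (vscal (1 - l) (vcat n y r)) =
  vcat n (vadd (vscal l x) (vscal (1 - l) y)) (vadd (vscal l t) (vscal (1 - l) r)).
Proof. apply functional_extensionality; intro i. unfold vadd, vscal, vcat. destruct (Nat.ltb i n); auto. Qed.

Lemma vsub_unitv k s r : vsub (unitv k s) (unitv k r) = unitv k (s - r).
Proof. apply functional_extensionality; intro i. unfold vsub, unitv. destruct (Nat.eqb i k); ring. Qed.

Lemma comb_unitv k l s r :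
  vadd (vscal l (unitv k s)) (vscal (1 - l) (unitv k r)) = unitv k (l * s + (1 - l) * r).
Proof. apply functional_extensionality; intro i. unfold vadd, vscal, unitv. destruct (Nat.eqb i k); ring. Qed.

Definition epi_pt (n : nat) (y : nat -> R) (s : R) : nat -> R := vcat n y (unitv 0 s).

Lemma dot_epi_pt n v y s : inRn n y ->
  dot (n + 1) (epi_pt n y s) v = dot n y (vfst n v) + s * v n.
Proof.
  intros Hy. unfold epi_pt. rewrite dot_vcat, dot_unitv, vsnd_lt by lia.
  rewrite Nat.add_0_r. reflexivity.
Qed.

Lemma vsub_epi_pt n y s x r : vsub (epi_pt n y s) (epi_pt n x r) = epi_pt n (vsub y x) (s - r).
Proof. unfold epi_pt. rewrite vsub_vcat, vsub_unitv. reflexivity. Qed.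

Lemma sqdist_epi_pt n y s x r : inRn n y -> inRn n x ->
  sqdist (n + 1) (epi_pt n y s) (epi_pt n x r) = dot n (vsub y x) (vsub y x) + (s - r) * (s - r).
Proof.
  intros Hy Hx. unfold sqdist. rewrite vsub_epi_pt, dot_epi_pt by (apply inRn_vsub; auto).
  unfold epi_pt. rewrite vfst_vcat by (apply inRn_vsub; auto).
  unfold vcat. replace (Nat.ltb n n) with false by (symmetry; apply Nat.ltb_ge; lia).
  rewrite Nat.sub_diag. reflexivity.
Qed.

Definition epigraph (n : nat) (f : (nat -> R) -> ereal) (u : nat -> R) : Prop :=
  exists y s, inRn n y /\ ele (f y) (EFin s) /\ u = epi_pt n y s.

Lemma epigraph_convex n f : convex n f -> (forall x, inRn n x -> f x <> ENInf) ->
  forall u w l, epigraph n f u -> epigraph n f w -> 0 < l < 1 ->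
  epigraph n f (vadd (vscal l u) (vscal (1 - l) w)).
Proof.
  intros Hc Hnm u w l [y [s [Hy [Hys ->]]]] [x [r [Hx [Hxr ->]]]] Hl.
  destruct (ele_fin_inv _ _ Hys (Hnm y Hy)) as [fy [Ey Hfy]].
  destruct (ele_fin_inv _ _ Hxr (Hnm x Hx)) as [fx [Ex Hfx]].
  exists (vadd (vscal l y) (vscal (1 - l) x)), (l * s + (1 - l) * r). split; [|split].
  - apply inRn_vadd; apply inRn_vscal; auto.
  - eapply ele_trans; [apply Hc; auto|]. rewrite Ey, Ex, !escal_fin. simpl. nra.
  - unfold epi_pt. rewrite comb_vcat, comb_unitv. reflexivity.
Qed.

Lemma epigraph_far n f x0 r0 s0 : lsc n f -> inRn n x0 -> f x0 = EFin r0 -> s0 < r0 ->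
  exists c0, 0 < c0 /\ forall u, epigraph n f u -> c0 <= sqdist (n + 1) u (epi_pt n x0 s0).
Proof.
  intros Hl Hx0 Hf0 Hs.
  destruct (Hl x0 ((s0 + r0) / 2) Hx0) as [del [Hdel Hnear]].
  { rewrite Hf0. apply (elt_of_ge _ r0); simpl; lra. }
  exists (Rmin (del * del) ((r0 - s0) / 2 * ((r0 - s0) / 2))).
  split; [apply Rmin_glb_lt; nra|].
  intros u [y [s [Hy [Hys ->]]]]. rewrite sqdist_epi_pt by auto.
  pose proof (dot_nonneg n (vsub y x0)) as Hd. pose proof (Rle_0_sqr (s - s0)). unfold Rsqr in *.
  destruct (Rlt_dec (norm n (vsub y x0)) del) as [Hlt|Hge].
  - destruct (Hnear y Hy Hlt) as [Ha _].
    pose proof (ele_trans _ _ _ Ha Hys) as Has. simpl in Has.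
    pose proof (Rmin_r (del * del) ((r0 - s0) / 2 * ((r0 - s0) / 2))). nra.
  - pose proof (Rmin_l (del * del) ((r0 - s0) / 2 * ((r0 - s0) / 2))).
    pose proof (norm_sq n (vsub y x0)). apply Rnot_lt_le in Hge. nra.
Qed.

Lemma affine_minorant n f :
  convex n f -> lsc n f -> (forall x, inRn n x -> f x <> ENInf) ->
  forall x0 r0 s0, inRn n x0 -> f x0 = EFin r0 -> s0 < r0 ->
  exists g c, inRn n g /\ (forall y, inRn n y -> ele (EFin (dot n g y + c)) (f y)) /\
              s0 < dot n g x0 + c.
Proof.
  intros Hc Hl Hnm x0 r0 s0 Hx0 Hf0 Hs.
  destruct (epigraph_far n f x0 r0 s0 Hl Hx0 Hf0 Hs) as [c0 [Hc0 Hfar]].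
  destruct (separation (n + 1) (epigraph n f) (epi_pt n x0 s0) c0) as [v [Hvv Hsep]]; auto.
  { apply epigraph_convex; auto. }
  { exists (epi_pt n x0 r0), x0, r0. rewrite Hf0. simpl. auto with real. }
  (* the separating functional, on (y, s) minus (x0, s0), is <a, y - x0> + b (s - s0) *)
  set (a := vfst n v). set (b := v n).
  assert (Hsep' : forall y s, inRn n y -> ele (f y) (EFin s) ->
                    dot (n + 1) v v <= dot n a (vsub y x0) + b * (s - s0)).
  { intros y s Hy Hys. specialize (Hsep (epi_pt n y s) ltac:(exists y, s; auto)).
    rewrite vsub_epi_pt, (dot_sym _ v (epi_pt _ _ _)), dot_epi_pt in Hsep
      by (apply inRn_vsub; auto).
    rewrite (dot_sym _ a). unfold a, b. lra. }
  assert (Hb : 0 < b).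
  { specialize (Hsep' x0 r0 Hx0 ltac:(rewrite Hf0; simpl; lra)).
    unfold dot at 2 in Hsep'. rewrite rsum_zero in Hsep' by (intros; unfold vsub; ring). nra. }
  exists (vscal (- / b) a), (s0 + (dot (n + 1) v v + dot n a x0) / b). split; [|split].
  - apply inRn_vscal, inRn_vfst.
  - intros y Hy. destruct (f y) as [r| |] eqn:Ey; [|apply ele_top|exfalso; apply (Hnm y Hy Ey)].
    specialize (Hsep' y r Hy ltac:(rewrite Ey; simpl; lra)).
    rewrite dot_vsub_r in Hsep'. simpl. rewrite dot_vscal_l.
    apply Rmult_le_reg_l with b; auto.
    replace (b * (- / b * dot n a y + (s0 + (dot (n + 1) v v + dot n a x0) / b)))
      with (- dot n a y + b * s0 + dot (n + 1) v v + dot n a x0) by (field; lra). lra.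
  - rewrite dot_vscal_l.
    replace (- / b * dot n a x0 + (s0 + (dot (n + 1) v v + dot n a x0) / b))
      with (s0 + dot (n + 1) v v / b) by (field; lra).
    pose proof (Rdiv_lt_0_compat _ _ Hvv Hb). lra.
Qed.

Lemma affine_above_near m w c z a : a < dot m w z + c ->
  exists d, 0 < d /\ forall y, norm m (vsub y z) < d -> a < dot m w y + c.
Proof.
  intros Ha. set (K := sabs m w + 1).
  assert (HK : 0 < K) by (pose proof (sabs_nonneg m w); unfold K; lra).
  exists ((dot m w z + c - a) / K). split; [apply Rdiv_lt_0_compat; lra|].
  intros y Hy. pose proof (dot_bound m w (vsub y z)) as Hb. rewrite dot_vsub_r in Hb.
  pose proof (Rle_abs (- (dot m w y - dot m w z))) as Habs. rewrite Rabs_Ropp in Habs.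
  apply Rmult_lt_compat_l with (r := K) in Hy; auto.
  replace (K * ((dot m w z + c - a) / K)) with (dot m w z + c - a) in Hy by (field; lra).
  pose proof (norm_nonneg m (vsub y z)). pose proof (sabs_nonneg m w). unfold K in *. nra.
Qed.

(* The value of a finite extended real (0 on the infinities). *)
Definition rval (a : ereal) : R := match a with EFin r => r | _ => 0 end.

Section SH_properties.
Variables (n N : nat) (J : (nat -> R) -> ereal) (H : nat -> (nat -> R) -> ereal).
Hypothesis hJ : Gamma0 n J.
Hypothesis hH : forall j, (j < N)%nat -> Gamma0 n (H j) /\ full_dom n (H j).

Lemma H_fin j p : (j < N)%nat -> inRn n p -> H j p = EFin (rval (H j p)).
Proof.
  intros Hj Hp. destruct (hH j Hj) as [[[_ Hb] _] Hf].
  destruct (H j p) eqn:E; auto; exfalso; [apply (Hf p Hp E)|apply (Hb p Hp E)].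
Qed.

Lemma J_dom : exists x0 r0, inRn n x0 /\ J x0 = EFin r0.
Proof.
  destruct hJ as [[[x0 [Hx0 Hn]] Hb] _]. exists x0, (rval (J x0)). split; auto.
  destruct (J x0) eqn:E; auto; [contradiction|]. exfalso; apply (Hb x0 Hx0 E).
Qed.

Lemma conj_ge p x r : inRn n x -> J x = EFin r -> ele (EFin (dot n p x - r)) (conj n J p).
Proof.
  intros Hx Ex. eapply ele_trans; [|apply esup_ub; exists x; split; eauto].
  rewrite Ex. simpl. lra.
Qed.

Lemma conj_cases p : conj n J p = EPInf \/ exists jp, conj n J p = EFin jp.
Proof.
  destruct J_dom as [x0 [r0 [Hx Hr]]].
  pose proof (ne_bot_of_ge _ _ (conj_ge p x0 r0 Hx Hr)).
  destruct (conj n J p); eauto; contradiction.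
Qed.

(* J* is proper: it is finite at the slope of any affine minorant of J. *)
Lemma conj_fin_somewhere : exists g jg, inRn n g /\ conj n J g = EFin jg.
Proof.
  destruct J_dom as [x0 [r0 [Hx Hr]]]. destruct hJ as [[_ Hb] [Hc Hl]].
  destruct (affine_minorant n J Hc Hl Hb x0 r0 (r0 - 1) Hx Hr ltac:(lra))
    as [g [c [Hg [Hm _]]]].
  assert (Hle : ele (conj n J g) (EFin (- c))).
  { apply esup_least. intros y [x [Hx' ->]]. specialize (Hm x Hx').
    destruct (J x); simpl in *; auto; try contradiction. lra. }
  exists g. destruct (conj_cases g) as [E|[jg E]]; [rewrite E in Hle; contradiction|eauto].
Qed.

Definition SH_arg (x t p : nat -> R) : ereal :=
  eplus (EFin (dot n p x))
     (eopp (eplus (conj n J p) (esum N (fun j => escal (t j) (H j p))))).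

Lemma SH_arg_fin x t p jp : inRn n p -> conj n J p = EFin jp ->
  SH_arg x t p = EFin (dot n p x - (jp + rsum N (fun j => t j * rval (H j p)))).
Proof.
  intros Hp Ej. unfold SH_arg. rewrite Ej, (esum_fin N _ (fun j => t j * rval (H j p))).
  - simpl. f_equal; ring.
  - intros j Hj. rewrite (H_fin j p Hj Hp). apply escal_fin.
Qed.

Lemma SH_pos x t : tnonneg N t -> SH_xt n N J H x t = esup (fun y => exists p, inRn n p /\ y = SH_arg x t p).
Proof. intro Ht. unfold SH_xt. destruct (excluded_middle_informative (tnonneg N t)); [reflexivity|contradiction]. Qed.

Lemma SH_neg x t : ~ tnonneg N t -> SH_xt n N J H x t = EPInf.
Proof. intro Ht. unfold SH_xt. destruct (excluded_middle_informative (tnonneg N t)); [contradiction|reflexivity]. Qed.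

Lemma SH_ge_term x t p jp : tnonneg N t -> inRn n p -> conj n J p = EFin jp ->
  ele (EFin (dot n p x - (jp + rsum N (fun j => t j * rval (H j p))))) (SH_xt n N J H x t).
Proof.
  intros Ht Hp Ej. rewrite SH_pos by auto. apply esup_ub. exists p; split; auto.
  rewrite (SH_arg_fin x t p jp); auto.
Qed.

Lemma SH_not_bot x t : tnonneg N t -> SH_xt n N J H x t <> ENInf.
Proof.
  intro Ht. destruct conj_fin_somewhere as [g [jg [Hg Eg]]].
  eapply ne_bot_of_ge, SH_ge_term; eauto.
Qed.

Lemma SH_le x t M : tnonneg N t ->
  (forall p jp, inRn n p -> conj n J p = EFin jp ->
     dot n p x - (jp + rsum N (fun j => t j * rval (H j p))) <= M) ->
  ele (SH_xt n N J H x t) (EFin M).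
Proof.
  intros Ht Hb. rewrite SH_pos by auto. apply esup_least. intros y [p [Hp ->]].
  destruct (conj_cases p) as [E|[jp E]].
  - unfold SH_arg. rewrite E. apply ele_bot.
  - rewrite (SH_arg_fin x t p jp Hp E). apply Hb; auto.
Qed.

Lemma SH_approx x t a : tnonneg N t -> elt (EFin a) (SH_xt n N J H x t) ->
  exists p jp, inRn n p /\ conj n J p = EFin jp /\
    a < dot n p x - (jp + rsum N (fun j => t j * rval (H j p))).
Proof.
  intros Ht [Hle Hne]. apply NNPP. intro Hno. apply Hne, ele_antisym; auto.
  apply SH_le; auto. intros p jp Hp Ej. apply Rnot_lt_le. intro; apply Hno; eauto.
Qed.

Lemma SH0_le x r : inRn n x -> J x = EFin r -> ele (SH_xt n N J H x (fun _ => 0)) (EFin r).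
Proof.
  intros Hx Ex. apply SH_le; [intros j _; lra|]. intros p jp Hp Ej.
  pose proof (conj_ge p x r Hx Ex) as Hc. rewrite Ej in Hc; simpl in Hc.
  rewrite rsum_zero by (intros; ring). lra.
Qed.

Lemma SH_cases z : SH n N J H z = EPInf \/
  (tnonneg N (vsnd n N z) /\ exists s, SH n N J H z = EFin s).
Proof.
  unfold SH. destruct (classic (tnonneg N (vsnd n N z))) as [Ht|Ht].
  - pose proof (SH_not_bot (vfst n z) (vsnd n N z) Ht).
    destruct (SH_xt n N J H (vfst n z) (vsnd n N z)); eauto; contradiction.
  - rewrite SH_neg; auto.
Qed.

Lemma SH_proper : proper (n + N) (SH n N J H).
Proof.
  split.
  - destruct J_dom as [x0 [r0 [Hx Hr]]]. exists (vcat n x0 (fun _ => 0)).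
    split; [apply inRn_vcat; auto; intros i _; auto|].
    unfold SH. rewrite vfst_vcat, vsnd_vcat by (auto; intros i _; auto).
    intro E. pose proof (SH0_le x0 r0 Hx Hr) as Hh. rewrite E in Hh. exact Hh.
  - intros z _. destruct (SH_cases z) as [E|[_ [s E]]]; rewrite E; discriminate.
Qed.

Lemma SH_convex : convex (n + N) (SH n N J H).
Proof.
  intros z1 z2 l _ _ Hl.
  destruct (SH_cases z1) as [E1|[T1 [s1 E1]]].
  { rewrite E1, escal_pinf by lra. apply ele_top. }
  destruct (SH_cases z2) as [E2|[T2 [s2 E2]]].
  { rewrite E2, (escal_pinf (1 - l)), eplus_pinf_r by lra. apply ele_top. }
  rewrite E1, E2, !escal_fin. unfold SH in *.
  rewrite vfst_comb, vsnd_comb. apply SH_le.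
  { intros j Hj. unfold vadd, vscal. pose proof (T1 j Hj). pose proof (T2 j Hj). nra. }
  intros p jp Hp Ej.
  pose proof (SH_ge_term (vfst n z1) (vsnd n N z1) p jp T1 Hp Ej) as G1. rewrite E1 in G1.
  pose proof (SH_ge_term (vfst n z2) (vsnd n N z2) p jp T2 Hp Ej) as G2. rewrite E2 in G2.
  simpl in G1, G2. rewrite dot_vadd_r, !dot_vscal_r.
  rewrite (rsum_ext N _ (fun j => l * (vsnd n N z1 j * rval (H j p))
                                + (1 - l) * (vsnd n N z2 j * rval (H j p))))
    by (intros; unfold vadd, vscal; ring).
  rewrite rsum_plus, !rsum_scal. nra.
Qed.

(* The affine piece of S_H with slope p, as a function of z = (x, t) in R^(n+N). *)
Lemma affine_piece_eq z p jp :
  dot (n + N) (vcat n p (fun j => - rval (H j p))) z + - jp =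
  dot n p (vfst n z) - (jp + rsum N (fun j => vsnd n N z j * rval (H j p))).
Proof.
  rewrite dot_vcat. unfold dot at 2.
  rewrite (rsum_ext N _ (fun j => - (vsnd n N z j * rval (H j p)))) by (intros; ring).
  rewrite rsum_opp. ring.
Qed.

Lemma SH_ge_affine z p jp : tnonneg N (vsnd n N z) -> inRn n p -> conj n J p = EFin jp ->
  ele (EFin (dot (n + N) (vcat n p (fun j => - rval (H j p))) z + - jp)) (SH n N J H z).
Proof.
  intros Ht Hp Ej. rewrite affine_piece_eq. apply SH_ge_term; auto.
Qed.

Lemma SH_lsc : lsc (n + N) (SH n N J H).
Proof.
  intros z a _ Ha.
  destruct (classic (tnonneg N (vsnd n N z))) as [Tz|Tz].
  - destruct (SH_approx _ _ a Tz Ha) as [p [jp [Hp [Ej Hpa]]]].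
    destruct (affine_above_near (n + N) (vcat n p (fun j => - rval (H j p))) (- jp) z a)
      as [d [Hd Hnear]].
    { rewrite affine_piece_eq. exact Hpa. }
    exists d. split; auto. intros y _ Hyz.
    destruct (classic (tnonneg N (vsnd n N y))) as [Ty|Ty].
    + apply (elt_of_ge _ _ _ (SH_ge_affine y p jp Ty Hp Ej)). apply Hnear, Hyz.
    + unfold SH. rewrite SH_neg by auto. split; [apply ele_top|discriminate].
  - (* a negative time coordinate stays negative nearby, where S_H = +oo *)
    assert (Hex : exists j, (j < N)%nat /\ vsnd n N z j < 0).
    { apply NNPP; intro Hno. apply Tz. intros j Hj. apply Rnot_lt_le. intro; apply Hno; eauto. }
    destruct Hex as [j [Hj Hneg]]. rewrite vsnd_lt in Hneg by auto.
    exists (- z (n + j)%nat). split; [lra|].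
    intros y _ Hd. unfold SH. rewrite SH_neg; [split; [apply ele_top|discriminate]|].
    intro Ty. specialize (Ty j Hj). rewrite vsnd_lt in Ty by auto.
    pose proof (coord_le_norm (n + N) (vsub y z) (n + j) ltac:(lia)) as Hc.
    assert (Hlt : Rabs (y (n + j)%nat - z (n + j)%nat) < - z (n + j)%nat) by (change (vsub y z (n + j)%nat) with (y (n + j)%nat - z (n + j)%nat) in Hc; lra).
    apply Rabs_def2 in Hlt. lra.
Qed.

Lemma SH_Gamma0 : Gamma0 (n + N) (SH n N J H).
Proof. split; [apply SH_proper|split; [apply SH_convex|apply SH_lsc]]. Qed.

(* Restricting to t = 0 gives S_H*(p, E) >= J*(p). *)
Lemma conjSH_ge p E : ele (conj n J p) (conj (n + N) (SH n N J H) (vcat n p E)).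
Proof.
  apply esup_least. intros y [x [Hx ->]].
  destruct (J x) as [r| |] eqn:Ex; [|apply ele_bot|exfalso; destruct hJ as [[_ Hb] _]; apply (Hb x Hx Ex)].
  set (z := vcat n x (fun _ => 0)).
  assert (Hz0 : inRn N (fun _ : nat => 0)) by (intros i _; auto).
  assert (T0 : tnonneg N (fun _ : nat => 0)) by (intros j _; lra).
  assert (ESH : SH n N J H z = SH_xt n N J H x (fun _ => 0)).
  { unfold SH, z. rewrite vfst_vcat, vsnd_vcat; auto. }
  destruct (ele_fin_inv _ _ (SH0_le x r Hx Ex) (SH_not_bot x _ T0))
    as [sv [Esv Hsv]].
  eapply ele_trans; [|apply esup_ub; exists z; split; [apply inRn_vcat; auto|reflexivity]].
  rewrite ESH, Esv, dot_vcat. unfold z. rewrite vfst_vcat, vsnd_vcat by auto.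
  replace (dot N E (fun _ => 0)) with 0 by (symmetry; apply rsum_zero; intros; ring).
  simpl. lra.
Qed.

Lemma conjSH_le p E jp : inRn n p -> conj n J p = EFin jp ->
  (forall j, (j < N)%nat -> E j + rval (H j p) <= 0) ->
  ele (conj (n + N) (SH n N J H) (vcat n p E)) (EFin jp).
Proof.
  intros Hp Ej Hc. apply esup_least. intros y [z [Hz ->]].
  destruct (SH_cases z) as [Es|[T [sv Es]]]; rewrite Es; [apply ele_bot|].
  pose proof (SH_ge_term (vfst n z) (vsnd n N z) p jp T Hp Ej) as G.
  unfold SH in Es. rewrite Es in G. simpl in G |- *. rewrite dot_vcat.
  assert (rsum N (fun j => vsnd n N z j * (E j + rval (H j p))) <= 0).
  { rewrite <- (rsum_zero N (fun _ => 0)) by auto. apply rsum_le. intros j Hj.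
    pose proof (T j Hj). pose proof (Hc j Hj). nra. }
  rewrite (rsum_ext N _ (fun j => E j * vsnd n N z j + vsnd n N z j * rval (H j p))) in H0
    by (intros; ring).
  rewrite rsum_plus in H0. unfold dot at 2. lra.
Qed.

Lemma SH_on_ray_le k g c x0 r0 s : (k < N)%nat -> 0 <= s ->
  (forall q, inRn n q -> ele (EFin (dot n g q + c)) (H k q)) ->
  inRn n x0 -> J x0 = EFin r0 ->
  ele (SH_xt n N J H (vadd x0 (vscal s g)) (unitv k s)) (EFin (r0 - s * c)).
Proof.
  intros Hk Hs Hmin Hx0 Hr0. apply SH_le.
  { intros j _. unfold unitv. destruct (Nat.eqb j k); lra. }
  intros q jq Hq Eq.
  pose proof (conj_ge q x0 r0 Hx0 Hr0) as Hc. rewrite Eq in Hc; simpl in Hc.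
  pose proof (Hmin q Hq) as Hm. rewrite (H_fin k q Hk Hq) in Hm. simpl in Hm.
  rewrite rsum_unitv, dot_vadd_r, dot_vscal_r, (dot_sym n q g) by auto.
  assert (s * (dot n g q + c) <= s * rval (H k q)) by (apply Rmult_le_compat_l; lra).
  lra.
Qed.

Lemma conjSH_inf p E k : inRn n p -> (k < N)%nat -> 0 < E k + rval (H k p) ->
  conj (n + N) (SH n N J H) (vcat n p E) = EPInf.
Proof.
  intros Hp Hk Hpos.
  destruct (hH k Hk) as [[[_ Hbk] [Hck Hlk]] _].
  destruct (affine_minorant n (H k) Hck Hlk Hbk p (rval (H k p)) (- E k) Hp (H_fin k p Hk Hp)
             ltac:(lra)) as [g [c [Hg [Hmin Hgp]]]].
  destruct J_dom as [x0 [r0 [Hx0 Hr0]]].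
  set (slope := dot n g p + c + E k). assert (Hslope : 0 < slope) by (unfold slope; lra).
  set (base := dot n p x0 - r0).
  apply esup_inf. intro M.
  set (s := Rmax 0 ((M - base) / slope)).
  assert (Hs0 : 0 <= s) by apply Rmax_l.
  assert (Hs1 : M - base <= s * slope).
  { pose proof (Rmax_r 0 ((M - base) / slope)) as Hm. fold s in Hm.
    apply Rmult_le_compat_r with (r := slope) in Hm; [|lra].
    replace ((M - base) / slope * slope) with (M - base) in Hm by (field; lra). lra. }
  set (x := vadd x0 (vscal s g)).
  assert (Hx : inRn n x) by (apply inRn_vadd; auto; apply inRn_vscal; auto).
  assert (Hek : inRn N (unitv k s)) by (apply inRn_unitv; auto).
  destruct (ele_fin_inv _ _ (SH_on_ray_le k g c x0 r0 s Hk Hs0 Hmin Hx0 Hr0)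
             (SH_not_bot x (unitv k s) ltac:(intros j _; unfold unitv; destruct (Nat.eqb j k); lra)))
    as [sv [Esv Hsv]]. fold x in Esv.
  eexists. split; [exists (vcat n x (unitv k s)); split; [apply inRn_vcat; auto|reflexivity]|].
  unfold SH. rewrite dot_vcat, vfst_vcat, vsnd_vcat, Esv by auto. simpl.
  rewrite (dot_sym N), dot_unitv by auto. unfold x.
  rewrite dot_vadd_r, dot_vscal_r, (dot_sym n p g). unfold slope, base in *. nra.
Qed.

Lemma conj_formula p E : inRn n p -> inRn N E ->
  conj (n + N) (SH n N J H) (vcat n p E) =
  eplus (conj n J p) (esum N (fun j => indic (ele (eplus (EFin (E j)) (H j p)) (EFin 0)))).
Proof.
  intros Hp HE. pose proof (conjSH_ge p E) as G.
  destruct (conj_cases p) as [Ej|[jp Ej]].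
  { rewrite Ej in G |- *. simpl. destruct (conj (n + N) (SH n N J H) (vcat n p E)); auto; contradiction. }
  rewrite Ej in G |- *.
  destruct (classic (forall j, (j < N)%nat -> ele (eplus (EFin (E j)) (H j p)) (EFin 0)))
    as [Hall|Hno].
  - rewrite esum_indic_all by auto. simpl. rewrite Rplus_0_r. apply ele_antisym; auto.
    apply conjSH_le; auto. intros j Hj. specialize (Hall j Hj).
    rewrite (H_fin j p Hj Hp) in Hall. exact Hall.
  - assert (Hex : exists k, (k < N)%nat /\ ~ ele (eplus (EFin (E k)) (H k p)) (EFin 0)).
    { apply NNPP; intro Hn. apply Hno. intros j Hj. apply NNPP; intro; apply Hn; eauto. }
    rewrite esum_indic_ex, eplus_pinf_r by auto.
    destruct Hex as [k [Hk Hnk]]. rewrite (H_fin k p Hk Hp) in Hnk. simpl in Hnk.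
    apply (conjSH_inf p E k); auto. lra.
Qed.

Lemma coercive_lower_bound j M : (j < N)%nat -> coercive1 n (H j) ->
  exists B, forall q, inRn n q -> M * norm n q - B <= rval (H j q).
Proof.
  intros Hj Hco.
  destruct (hH j Hj) as [[[_ Hb] [Hc Hl]] _].
  set (o := fun _ : nat => 0). assert (Ho : inRn n o) by (intros i _; auto).
  destruct (affine_minorant n (H j) Hc Hl Hb o (rval (H j o)) (rval (H j o) - 1) Ho
             (H_fin j o Hj Ho) ltac:(lra)) as [g [c [_ [Hmin _]]]].
  destruct (Hco M) as [R0 HR0].
  exists (Rabs (M * R0) + Rabs (sabs n g * R0) + Rabs c). intros q Hq.
  pose proof (Rabs_pos (M * R0)). pose proof (Rabs_pos (sabs n g * R0)). pose proof (Rabs_pos c).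
  destruct (Rlt_dec R0 (norm n q)) as [Hlt|Hge].
  - pose proof (HR0 q Hq Hlt) as Hh. rewrite (H_fin j q Hj Hq) in Hh. simpl in Hh. lra.
  - (* on the ball |q| <= R0 both M |q| and the affine minorant are bounded *)
    apply Rnot_lt_le in Hge.
    pose proof (Hmin q Hq) as Hh. rewrite (H_fin j q Hj Hq) in Hh. simpl in Hh.
    pose proof (dot_bound n g q) as A1. pose proof (Rle_abs (- dot n g q)) as A2.
    rewrite Rabs_Ropp in A2. pose proof (Rle_abs (- c)) as A3. rewrite Rabs_Ropp in A3.
    pose proof (Rle_abs (M * R0)). pose proof (Rle_abs (sabs n g * R0)).
    pose proof (sabs_nonneg n g). pose proof (norm_nonneg n q).
    destruct (Rle_dec 0 M).
    + assert (M * norm n q <= M * R0) by (apply Rmult_le_compat_l; lra).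
      assert (sabs n g * norm n q <= sabs n g * R0) by (apply Rmult_le_compat_l; lra). lra.
    + assert (sabs n g * norm n q <= sabs n g * R0) by (apply Rmult_le_compat_l; lra). nra.
Qed.

Lemma coercive_family_bound (M : nat -> R) :
  (forall j, (j < N)%nat -> coercive1 n (H j)) ->
  exists B, forall j, (j < N)%nat -> forall q, inRn n q -> M j * norm n q - B j <= rval (H j q).
Proof.
  intros Hco.
  exists (fun j => epsilon (inhabits 0)
            (fun B => forall q, inRn n q -> M j * norm n q - B <= rval (H j q))).
  intros j Hj. apply epsilon_spec, coercive_lower_bound; auto.
Qed.

(* With t_k > 0, the term t_k H_k(p) dominates the linear growth of <p, x - x0>. *)
Lemma SH_finite x t :
  (forall j, (j < N)%nat -> coercive1 n (H j)) ->
  inRn n x -> inRn N t -> tnonneg N t -> (exists j, (j < N)%nat /\ t j <> 0) ->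
  exists r, SH n N J H (vcat n x t) = EFin r.
Proof.
  intros Hco Hx Ht Tt [k [Hk Htk]].
  assert (Htk' : 0 < t k) by (pose proof (Tt k Hk); lra).
  unfold SH. rewrite vfst_vcat, vsnd_vcat by auto.
  destruct J_dom as [x0 [r0 [Hx0 Hr0]]].
  set (Mk := sabs n (vsub x x0) / t k).
  destruct (coercive_family_bound (unitv k Mk) Hco) as [B HB].
  set (TB := rsum N (fun j => t j * B j)).
  assert (Hup : ele (SH_xt n N J H x t) (EFin (r0 + TB))).
  { apply SH_le; auto. intros q jq Hq Eq.
    pose proof (conj_ge q x0 r0 Hx0 Hr0) as Hc. rewrite Eq in Hc; simpl in Hc.
    assert (HS : rsum N (fun j => t j * (unitv k Mk j * norm n q - B j))
                 <= rsum N (fun j => t j * rval (H j q))).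
    { apply rsum_le. intros j Hj. apply Rmult_le_compat_l; auto. }
    rewrite (rsum_ext N _ (fun j => unitv k Mk j * (t j * norm n q) + - (t j * B j))) in HS
      by (intros; ring).
    rewrite rsum_plus, rsum_unitv, rsum_opp in HS by auto. fold TB in HS.
    assert (A0 : Mk * (t k * norm n q) = sabs n (vsub x x0) * norm n q)
      by (unfold Mk; field; lra).
    pose proof (dot_bound n (vsub x x0) q) as A1. pose proof (Rle_abs (dot n (vsub x x0) q)) as A2.
    rewrite dot_vsub_l, (dot_sym n x q), (dot_sym n x0 q) in A1, A2. lra. }
  destruct (ele_fin_inv _ _ Hup (SH_not_bot x t Tt)) as [sv [Esv _]]. eauto.
Qed.

End SH_properties.

Theorem proposition3p1 (n N : nat) (J : (nat -> R) -> ereal)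
  (H : nat -> (nat -> R) -> ereal)
  (hn : (1 <= n)%nat) (hN : (1 <= N)%nat)
  (hJ : Gamma0 n J)
  (hH : forall j, (j < N)%nat -> Gamma0 n (H j) /\ full_dom n (H j)) :
  Gamma0 (n + N) (SH n N J H) /\
  (forall p E, inRn n p -> inRn N E ->
     conj (n + N) (SH n N J H) (vcat n p E) =
     eplus (conj n J p)
       (esum N (fun j => indic (ele (eplus (EFin (E j)) (H j p)) (EFin 0))))) /\
  ((* (H1) *)
   (forall j, (j < N)%nat ->
      finite_valued n (H j) /\ convex n (H j) /\ coercive1 n (H j)) ->
   (exists j, (j < N)%nat /\ strictly_convex n (H j)) ->
   (* (H2) *)
   Gamma0 n J ->
   forall x t, inRn n x -> inRn N t -> tnonneg N t ->
     (exists j, (j < N)%nat /\ t j <> 0) ->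
     exists r, SH n N J H (vcat n x t) = EFin r).
Proof.
  split; [|split].
  - apply SH_Gamma0; auto.
  - intros p E Hp HE. apply conj_formula; auto.
  - intros H1 _ _ x t Hx Ht Tt Hex. apply SH_finite; auto.
    intros j Hj. apply (H1 j Hj).
Qed.
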